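(* Under the setting and hypotheses of the outer-loop iteration below (with $\epsilon\in(0,1/3)$), fix a target radius $R_k>R_\infty$ and a stopping threshold $$C_{stop}\ge\|\Sigma_g\|_{op}+\delta_\Sigma+(\delta_\mu+R_k)^2+\delta_T .$$ Consider the stopped procedure: at outer iteration $s$, stop and output $\bar w^{[s]}$ if $\gamma(\bar w^{[s]};\hat\mu^{[s]})\le C_{stop}$; otherwise set $\hat\mu^{[s+1]}=\sum_n\bar w^{[s]}_ng_n$ and continue. Then: (1) if $e^{[s]}\le R_k$ then $\gamma(\bar w^{[s]};\hat\mu^{[s]})\le C_{stop}$; consequently the procedure stops at some iteration $s\le s_{\max}:=1+\Big\lceil\frac{\log\big((e^{[1]}-R_\infty)_+/(R_k-R_\infty)\big)}{\log(1/\alpha_\epsilon)}\Big\rceil$ (with $s_{\max}:=1$ if $e^{[1]}\le R_\infty$); (2) if the procedure stops at iteration $s$, then $\big\|\sum_{n=1}^N\bar w^{[s]}_ng_n-\mu_g\big\|_2\le\delta_\mu+\alpha_\epsilon\sqrt{C_{stop}}$.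
   Context: Fix $N\ge1$, $p\ge2$, $\epsilon\in(0,1/3)$ and vectors $g_1,\dots,g_N\in\mathbb R^p$ with $\nu=\max_{i,j}\|g_i-g_j\|_2^2>0$; fix $T\ge4\max\{\log\frac1{1-\epsilon},\log p\}$ and $\delta_T=4\nu(\sqrt{\log(1/(1-\epsilon))/T}+\sqrt{\log p/T})$. For an index set $I$ and $\epsilon'\in[0,1)$, $\Delta_{I,\epsilon'}=\{w\in\mathbb R^I:\sum_{n\in I}w_n=1,0\le w_n\le\frac1{(1-\epsilon')|I|}\}$; $\Delta_{N,\epsilon}=\Delta_{[N],\epsilon}$. Density matrices $\mathfrak D_p=\{\rho\succeq0\text{ symmetric},\mathrm{Tr}\rho=1\}$. For $\hat\mu\in\mathbb R^p$: $S(w;\hat\mu)=\sum_nw_n(g_n-\hat\mu)(g_n-\hat\mu)^\top$, $\gamma(w;\hat\mu)=\|S(w;\hat\mu)\|_{op}$, $\mathrm{OPT}(\hat\mu)=\min_{w\in\Delta_{N,\epsilon}}\max_{\rho\in\mathfrak D_p}\mathrm{Tr}(S(w;\hat\mu)\rho)$. Inlier stability condition: a partition $[N]=I_{in}\sqcup I_{out}$ with $|I_{out}|\le\epsilon N$, $\mu_g\in\mathbb R^p$, symmetric PSD $\Sigma_g$, constants $\delta_\mu,\delta_\Sigma\ge0$ with, for every $w\in\Delta_{I_{in},\epsilon/(1-\epsilon)}$, $\|\sum_{n\in I_{in}}w_n(g_n-\mu_g)\|_2\le\delta_\mu$ and $\sum_{n\in I_{in}}w_n(g_n-\mu_g)(g_n-\mu_g)^\top\preceq\Sigma_g+\delta_\Sigma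 I$. Outer-loop iteration: $\hat\mu^{[1]}\in\operatorname{conv}\{g_n\}$; at iteration $s$ a weight vector $\bar w^{[s]}\in\Delta_{N,\epsilon}$ is produced with $\gamma(\bar w^{[s]};\hat\mu^{[s]})\le\mathrm{OPT}(\hat\mu^{[s]})+\delta_T$ (e.g. by MW–MMW rounds with uniform start and step sizes $\eta_w=\frac1\nu\sqrt{\log(1/(1-\epsilon))/T}$, $\eta_\rho=\frac1\nu\sqrt{\log p/T}$), and if not stopped $\hat\mu^{[s+1]}=\sum_n\bar w^{[s]}_ng_n$. Set $e^{[s]}=\|\hat\mu^{[s]}-\mu_g\|_2$, $\alpha_\epsilon=\sqrt{\epsilon/(1-2\epsilon)}$, $R_{\epsilon,T}=(1+\alpha_\epsilon)\delta_\mu+\alpha_\epsilon\sqrt{\|\Sigma_g\|_{op}+\delta_\Sigma+\delta_T}$, $R_\infty=R_{\epsilon,T}/(1-\alpha_\epsilon)$. *)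

From HB Require Import structures.
From mathcomp Require Import all_boot all_order all_algebra.
From mathcomp Require Import all_classical all_reals exp.
Set Implicit Arguments. Unset Strict Implicit. Unset Printing Implicit Defensive.
Import Order.TTheory GRing.Theory Num.Theory.
Local Open Scope ring_scope.
Local Open Scope classical_set_scope.

Section Defs.
Variable R : realType.

Definition norm2 (p : nat) (x : 'cV[R]_p) : R := Num.sqrt (\sum_i (x i 0) ^+ 2).

Definition opnorm (p : nat) (A : 'M[R]_p) : R :=
  sup [set norm2 (A *m x) | x in [set x : 'cV[R]_p | norm2 x <= 1]].

Definition symmetric (p : nat) (A : 'M[R]_p) : Prop := A^T = A.
Definition psd (p : nat) (A : 'M[R]_p) : Prop :=
  symmetric A /\ forall x : 'cV[R]_p, 0 <= (x^T *m A *m x) 0 0.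
Definition loewner_le (p : nat) (A B : 'M[R]_p) : Prop :=
  forall x : 'cV[R]_p, (x^T *m A *m x) 0 0 <= (x^T *m B *m x) 0 0.

Definition density (p : nat) : set 'M[R]_p :=
  [set rho | psd rho /\ \tr rho = 1].

(* Delta_{I,eps'} : weights indexed by 'I_N, only the entries in I matter *)
Definition DeltaI (N : nat) (I : {set 'I_N}) (eps' : R) : set ('I_N -> R) :=
  [set w | \sum_(n in I) w n = 1 /\
           forall n, n \in I -> 0 <= w n /\ w n <= 1 / ((1 - eps') * #|I|%:R)].
Definition DeltaN (N : nat) (eps : R) : set ('I_N -> R) := DeltaI [set: 'I_N] eps.

Definition wmean (N p : nat) (g : 'I_N -> 'cV[R]_p) (w : 'I_N -> R) : 'cV[R]_p :=
  \sum_n w n *: g n.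

Definition Smat (N p : nat) (g : 'I_N -> 'cV[R]_p) (w : 'I_N -> R) (mu : 'cV[R]_p)
  : 'M[R]_p := \sum_n w n *: ((g n - mu) *m (g n - mu)^T).

Definition gammaf (N p : nat) (g : 'I_N -> 'cV[R]_p) (w : 'I_N -> R) (mu : 'cV[R]_p) : R :=
  opnorm (Smat g w mu).

Definition OPT (N p : nat) (eps : R) (g : 'I_N -> 'cV[R]_p) (mu : 'cV[R]_p) : R :=
  inf [set sup [set \tr (Smat g w mu *m rho) | rho in @density p] | w in DeltaI [set: 'I_N] eps].

Definition nu (N p : nat) (g : 'I_N -> 'cV[R]_p) : R :=
  \big[Order.max/0]_(i < N) \big[Order.max/0]_(j < N) norm2 (g i - g j) ^+ 2.

Definition deltaT (N p : nat) (g : 'I_N -> 'cV[R]_p) (eps : R) (T : nat) : R :=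
  4 * nu g * (Num.sqrt (ln (1 / (1 - eps)) / T%:R) + Num.sqrt (ln p%:R / T%:R)).

Definition in_conv (N p : nat) (g : 'I_N -> 'cV[R]_p) (mu : 'cV[R]_p) : Prop :=
  exists lam : 'I_N -> R, (forall n, 0 <= lam n) /\ \sum_n lam n = 1 /\ mu = wmean g lam.

Definition inlier_stable (N p : nat) (eps : R) (g : 'I_N -> 'cV[R]_p)
  (Iin : {set 'I_N}) (mug : 'cV[R]_p) (Sigg : 'M[R]_p) (dmu dSig : R) : Prop :=
  #|~: Iin|%:R <= eps * N%:R /\ psd Sigg /\ 0 <= dmu /\ 0 <= dSig /\
  forall w, DeltaI Iin (eps / (1 - eps)) w ->
    norm2 (\sum_(n in Iin) w n *: (g n - mug)) <= dmu /\
    loewner_le (\sum_(n in Iin) w n *: ((g n - mug) *m (g n - mug)^T))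
               (Sigg + dSig%:M).

Definition alpha_eps (eps : R) : R := Num.sqrt (eps / (1 - 2 * eps)).

Definition R_epsT (eps dmu sigop dSig dT : R) : R :=
  (1 + alpha_eps eps) * dmu + alpha_eps eps * Num.sqrt (sigop + dSig + dT).

Definition R_inf (eps dmu sigop dSig dT : R) : R :=
  R_epsT eps dmu sigop dSig dT / (1 - alpha_eps eps).

(* s_max; the ceiling is clipped at 0 so that s_max >= 1 *)
Definition s_max (eps e1 Rinf Rk : R) : int :=
  if e1 <= Rinf then 1%Z
  else (1 + Num.max 0 (Num.ceil (ln ((e1 - Rinf) / (Rk - Rinf)) / ln (1 / alpha_eps eps))))%R.

End Defs.
Arguments DeltaN {R} N eps.
Arguments density {R} p.

From HB Require Import structures.
From mathcomp Require Import all_boot all_order all_algebra.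
From mathcomp Require Import all_classical all_reals exp.
From mathcomp.algebra_tactics Require Import ring lra.
Import Order.TTheory GRing.Theory Num.Theory.
Local Open Scope ring_scope.
Set Implicit Arguments. Unset Strict Implicit. Unset Printing Implicit Defensive.

(* The outer loop contracts the error towards the inlier mean.  Resilience: for
   any w in Delta_{N,eps} the weighted mean lies within
   delta_mu + alpha_eps * sqrt (gamma (w; mu)) of mu_g.  Indeed, split the centred first
   moment of w along the unit direction of the error into its inlier part, which stability
   controls after renormalising w on I_in, and its outlier part, which Cauchy-Schwarz
   bounds by the outlier mass (at most eps / (1 - eps)) times the weighted variance, itself
   at most gamma.  On the other hand, the uniform weights on I_in witness
   OPT mu <= |Sigma_g| + delta_Sigma + (delta_mu + |mu - mu_g|)^2, because tr (S rho) <= B for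
   every density matrix rho once S <= B I.  Chaining the two, every non-stopping step gives
   e_(s+1) - R_inf <= alpha_eps (e_s - R_inf), so the error falls below R_k within s_max - 1
   steps, and then gamma <= C_stop forces a stop; at a stop, resilience yields (2). *)

Section RealSums.
Variable R : realFieldType.

Lemma discriminant_le (a b c : R) : 0 <= c ->
  (forall t, 0 <= a + 2 * b * t + c * t ^+ 2) -> b ^+ 2 <= a * c.
Proof.
move=> c_ge0 nonneg; have [c0|c_neq0] := eqVneq c 0.
  rewrite c0 mulr0; have [->|b_neq0] := eqVneq b 0; first by rewrite expr0n.
  have := nonneg (- (a + 1) / (2 * b)); rewrite c0 mul0r addr0.
  have -> : 2 * b * (- (a + 1) / (2 * b)) = - (a + 1) by field.
  lra.
have c_gt0 : 0 < c by rewrite lt_def c_neq0.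
have := nonneg (- b / c).
have -> : a + 2 * b * (- b / c) + c * (- b / c) ^+ 2 = (a * c - b ^+ 2) / c by field.
by rewrite pmulr_lge0 ?invr_gt0 // subr_ge0.
Qed.

Lemma wsum_sqr_shift (I : finType) (P : pred I) (w z : I -> R) (c : R) :
  \sum_(i | P i) w i * (z i + c) ^+ 2 =
  \sum_(i | P i) w i * z i ^+ 2 + 2 * c * \sum_(i | P i) w i * z i
  + c ^+ 2 * \sum_(i | P i) w i.
Proof.
rewrite !mulr_sumr -!big_split; apply: eq_bigr => i _ /=; ring.
Qed.

Lemma wsum_mul_sqr_le (I : finType) (P : pred I) (w z : I -> R) :
  (forall i, 0 <= w i) ->
  (\sum_(i | P i) w i * z i) ^+ 2 <=
  (\sum_(i | P i) w i) * \sum_(i | P i) w i * z i ^+ 2.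
Proof.
move=> w_ge0; rewrite mulrC; apply: discriminant_le; first exact: sumr_ge0.
move=> t; rewrite [2 * _ * t]mulrAC [_ * t ^+ 2]mulrC -wsum_sqr_shift.
by apply: sumr_ge0 => i _; rewrite mulr_ge0 ?sqr_ge0.
Qed.

Lemma mean_zero_part_sqr_le (I : finType) (P : pred I) (w z : I -> R) :
  (forall i, 0 <= w i) -> \sum_i w i = 1 -> \sum_i w i * z i = 0 ->
  (\sum_(i | P i) w i * z i) ^+ 2 <=
  (\sum_(i | P i) w i) * (\sum_(i | ~~ P i) w i) * \sum_i w i * z i ^+ 2.
Proof.
move=> w_ge0 w_sum1 z_mean0.
have cs_in := wsum_mul_sqr_le P z w_ge0.
have /= cs_out := wsum_mul_sqr_le (fun i => ~~ P i) z w_ge0.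
have a_ge0 : 0 <= \sum_(i | ~~ P i) w i by exact: sumr_ge0.
have b_ge0 : 0 <= \sum_(i | P i) w i by exact: sumr_ge0.
have splitP (F : I -> R) : \sum_i F i = \sum_(i | P i) F i + \sum_(i | ~~ P i) F i.
  exact: bigID.
rewrite splitP in w_sum1; rewrite splitP in z_mean0; rewrite splitP.
have z_out : \sum_(i | ~~ P i) w i * z i = - \sum_(i | P i) w i * z i by lra.
rewrite z_out sqrrN in cs_out; nra.
Qed.

End RealSums.

Section Vdot.
Variables (R : realFieldType) (p : nat).
Implicit Types (x y u : 'cV[R]_p) (A : 'M[R]_p).

Definition vdot x y : R := (x^T *m y) 0 0.

Lemma vdotE x y : vdot x y = \sum_i x i 0 * y i 0.
Proof. by rewrite /vdot mxE; apply: eq_bigr => i _; rewrite mxE. Qed.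

Lemma vdotC x y : vdot x y = vdot y x.
Proof. by rewrite !vdotE; apply: eq_bigr => i _; rewrite mulrC. Qed.

Lemma vdotDr x y z : vdot x (y + z) = vdot x y + vdot x z.
Proof. by rewrite /vdot mulmxDr mxE. Qed.

Lemma vdotZr x y c : vdot x (c *: y) = c * vdot x y.
Proof. by rewrite /vdot -scalemxAr mxE. Qed.

Lemma vdotBr x y z : vdot x (y - z) = vdot x y - vdot x z.
Proof. by rewrite vdotDr -scaleN1r vdotZr mulN1r. Qed.

Lemma vdotDl x y z : vdot (x + y) z = vdot x z + vdot y z.
Proof. by rewrite vdotC vdotDr !(vdotC z). Qed.

Lemma vdotZl x y c : vdot (c *: x) y = c * vdot x y.
Proof. by rewrite vdotC vdotZr vdotC. Qed.

Lemma vdot_sumr (I : finType) (P : pred I) x (F : I -> 'cV[R]_p) :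
  vdot x (\sum_(i | P i) F i) = \sum_(i | P i) vdot x (F i).
Proof. by rewrite /vdot mulmx_sumr summxE. Qed.

Lemma vdot_deltal i x : vdot (delta_mx i 0) x = x i 0.
Proof. by rewrite /vdot trmx_delta -rowE mxE. Qed.

Lemma vdot_mulmx_trmx A x y : vdot y (A *m x) = vdot x (A^T *m y).
Proof. by rewrite vdotC /vdot trmx_mul mulmxA. Qed.

Lemma vdot_ge0 x : 0 <= vdot x x.
Proof. by rewrite vdotE; apply: sumr_ge0 => i _; rewrite -expr2 sqr_ge0. Qed.

Lemma vdot_sqr_le x y : vdot x y ^+ 2 <= vdot x x * vdot y y.
Proof.
apply: discriminant_le (vdot_ge0 y) _ => t.
have -> : vdot x x + 2 * vdot x y * t + vdot y y * t ^+ 2 =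
          vdot (x + t *: y) (x + t *: y).
  by rewrite vdotDl !vdotDr !vdotZl !vdotZr (vdotC y x); ring.
exact: vdot_ge0.
Qed.

Definition qform A x : R := vdot x (A *m x).

Lemma qformE A x : (x^T *m A *m x) 0 0 = qform A x.
Proof. by rewrite -mulmxA. Qed.

Lemma qformD A B x : qform (A + B) x = qform A x + qform B x.
Proof. by rewrite /qform mulmxDl vdotDr. Qed.

Lemma qformB A B x : qform (A - B) x = qform A x - qform B x.
Proof. by rewrite /qform mulmxBl vdotBr. Qed.

Lemma qformZ A c x : qform (c *: A) x = c * qform A x.
Proof. by rewrite /qform -scalemxAl vdotZr. Qed.

Lemma qform_sum (I : finType) (P : pred I) (F : I -> 'M[R]_p) x :
  qform (\sum_(i | P i) F i) x = \sum_(i | P i) qform (F i) x.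
Proof. by rewrite /qform mulmx_suml vdot_sumr. Qed.

Lemma qform_scalar c x : qform c%:M x = c * vdot x x.
Proof. by rewrite /qform mul_scalar_mx vdotZr. Qed.

Lemma qform_outer u x : qform (u *m u^T) x = vdot x u ^+ 2.
Proof.
rewrite /qform /vdot -mulmxA mulmxA mxE big_ord1 expr2.
by congr (_ * _); rewrite -[u^T *m x]trmxK trmx_mul trmxK mxE.
Qed.

Lemma qform_scale A c x : qform A (c *: x) = c ^+ 2 * qform A x.
Proof. by rewrite /qform -scalemxAr vdotZl vdotZr mulrA -expr2. Qed.

Lemma qform_delta A i : qform A (delta_mx i 0) = A i i.
Proof. by rewrite /qform vdot_deltal -colE mxE. Qed.

Lemma qformDr A x y : A^T = A ->
  qform A (x + y) = qform A x + 2 * vdot x (A *m y) + qform A y.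
Proof.
move=> A_sym; rewrite /qform mulmxDr vdotDl !vdotDr.
by rewrite [vdot y (A *m x)]vdot_mulmx_trmx A_sym; ring.
Qed.

End Vdot.

Section Norm2.
Variables (R : realType) (p : nat).
Implicit Types (x y : 'cV[R]_p) (A : 'M[R]_p).

Lemma norm2_vdot x : norm2 x = Num.sqrt (vdot x x).
Proof. by rewrite vdotE /norm2; congr Num.sqrt; apply: eq_bigr => i _; rewrite expr2. Qed.

Lemma norm2_ge0 x : 0 <= norm2 x.
Proof. exact: sqrtr_ge0. Qed.

Lemma norm2_sqr x : norm2 x ^+ 2 = vdot x x.
Proof. by rewrite norm2_vdot sqr_sqrtr // vdot_ge0. Qed.

Lemma norm2Z c x : norm2 (c *: x) = `|c| * norm2 x.
Proof.
by rewrite !norm2_vdot vdotZl vdotZr mulrA -expr2 sqrtrM ?sqr_ge0 // sqrtr_sqr.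
Qed.

Lemma norm2N x : norm2 (- x) = norm2 x.
Proof. by rewrite -scaleN1r norm2Z normrN normr1 mul1r. Qed.

Lemma vdot_le_norm2 x y : `|vdot x y| <= norm2 x * norm2 y.
Proof.
rewrite -sqrtr_sqr !norm2_vdot -sqrtrM ?vdot_ge0 // ler_wsqrtr //.
exact: vdot_sqr_le.
Qed.

Lemma opnorm_ub A x : norm2 x <= 1 -> norm2 (A *m x) <= opnorm A.
Proof.
move=> x_le1; apply: ub_le_sup; last by exists x.
exists (Num.sqrt (\sum_i vdot (row i A)^T (row i A)^T)) => _ [y /= y_le1 <-].
have yy_le1 : vdot y y <= 1 by rewrite -norm2_sqr expr_le1 ?norm2_ge0.
rewrite norm2_vdot ler_wsqrtr // vdotE; apply: ler_sum => i _.
have -> : (A *m y) i 0 = vdot (row i A)^T y by rewrite /vdot trmxK -row_mul [RHS]mxE.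
rewrite -expr2; apply: le_trans (vdot_sqr_le _ _) _.
by rewrite ler_piMr ?vdot_ge0.
Qed.

Lemma opnorm_ge0 A : 0 <= opnorm A.
Proof.
have := @opnorm_ub A 0; rewrite mulmx0 norm2_vdot /vdot mulmx0 mxE sqrtr0.
by apply; rewrite ler01.
Qed.

Lemma qform_le_opnorm A x : qform A x <= opnorm A * vdot x x.
Proof.
rewrite -norm2_sqr; apply: le_trans (ler_norm _) _.
apply: le_trans (vdot_le_norm2 _ _) _.
have [->|x_neq0] := eqVneq (norm2 x) 0; first by rewrite mul0r expr0n /= mulr0.
have x_gt0 : 0 < norm2 x by rewrite lt_def x_neq0 norm2_ge0.
have := @opnorm_ub A ((norm2 x)^-1 *: x).
rewrite -scalemxAr !norm2Z ger0_norm ?invr_ge0 ?norm2_ge0 // mulVf // => /(_ (lexx 1)).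
rewrite mulrC ler_pdivrMr // => Ax_le.
by rewrite expr2 mulrA [norm2 x * _]mulrC ler_pM2r.
Qed.

End Norm2.

Section PsdTrace.
Variables (R : realType) (p : nat).
Implicit Types (x u : 'cV[R]_p) (M rho : 'M[R]_p).

Lemma psd_qform_ge0 rho x : psd rho -> 0 <= qform rho x.
Proof. by case=> _ /(_ x); rewrite qformE. Qed.

Lemma psd_diag_ge0 rho i : psd rho -> 0 <= rho i i.
Proof. by rewrite -qform_delta; apply: psd_qform_ge0. Qed.

Lemma psd_col_sqr_le rho x i : psd rho -> vdot x (col i rho) ^+ 2 <= qform rho x * rho i i.
Proof.
move=> rho_psd; apply: discriminant_le; first exact: psd_diag_ge0.
move=> t; have := psd_qform_ge0 (x + t *: delta_mx i 0) rho_psd.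
rewrite qformDr; last by case: rho_psd.
rewrite qform_scale qform_delta -scalemxAr vdotZr -colE; nra.
Qed.

Lemma psd_offdiag0 rho i j : psd rho -> rho i i = 0 -> rho i j = 0.
Proof.
move=> rho_psd rii0; have := psd_col_sqr_le (delta_mx j 0) i rho_psd.
rewrite rii0 mulr0 vdot_deltal mxE => sqr_le0.
have [rho_sym _] := rho_psd; rewrite -(rho_sym : rho^T = rho) mxE.
by apply/eqP; rewrite -sqrf_eq0 eq_le sqr_le0 sqr_ge0.
Qed.

Definition deflate rho i : 'M[R]_p := rho - (rho i i)^-1 *: (col i rho *m (col i rho)^T).

Lemma deflateE rho i j k : deflate rho i j k = rho j k - (rho i i)^-1 * (rho j i * rho k i).
Proof. by rewrite !mxE big_ord1 !mxE. Qed.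

Lemma psd_deflate rho i : psd rho -> 0 < rho i i -> psd (deflate rho i).
Proof.
move=> rho_psd rii_gt0; have [rho_sym _] := rho_psd; split.
  apply/matrixP => j k; have := congr1 (fun A : 'M[R]_p => A j k) (rho_sym : rho^T = rho).
  rewrite /= [rho^T j k]mxE => rho_kj.
  by rewrite [LHS]mxE !deflateE rho_kj; ring.
move=> x; rewrite qformE qformB qformZ qform_outer subr_ge0 ler_pdivrMl // mulrC.
exact: psd_col_sqr_le.
Qed.

Lemma deflate_support_proper rho i : psd rho -> 0 < rho i i ->
  [set k | deflate rho i k k != 0] \proper [set k | rho k k != 0].
Proof.
move=> rho_psd rii_gt0; apply/properP; split.
  apply/fintype.subsetP => k; rewrite !inE deflateE; apply: contraNneq => rkk0.
  by rewrite rkk0 (psd_offdiag0 i rho_psd rkk0) mul0r mulr0 subr0.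
exists i; first by rewrite inE gt_eqF.
by rewrite inE negbK deflateE mulKf ?subrr // gt_eqF.
Qed.

Lemma mxtrace_mul_outer M u : \tr (M *m (u *m u^T)) = qform M u.
Proof. by rewrite mulmxA mxtrace_mulC /mxtrace big_ord1. Qed.

Lemma mxtrace_deflate M rho i :
  \tr (M *m rho) = \tr (M *m deflate rho i) + (rho i i)^-1 * qform M (col i rho).
Proof.
by rewrite /deflate mulmxBr raddfB /= -scalemxAr mxtraceZ mxtrace_mul_outer subrK.
Qed.

Lemma psd_diag0 rho : psd rho -> (forall i, rho i i = 0) -> rho = 0.
Proof.
by move=> rho_psd diag0; apply/matrixP => i j; rewrite mxE (psd_offdiag0 j rho_psd).
Qed.

(* No spectral theorem: induct on the number of nonzero diagonal entries of rho,
   peeling off one rank-one term at a time with [deflate]. *)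
Lemma mxtrace_mul_psd_ge0 M rho :
  (forall x, 0 <= qform M x) -> psd rho -> 0 <= \tr (M *m rho).
Proof.
move=> M_ge0; have [n] := ubnP #|[set k | rho k k != 0]|.
elim: n rho => // n IHn rho supp_lt rho_psd.
have [i rii_neq0|diag0] := pickP (fun k => rho k k != 0); last first.
  by rewrite (psd_diag0 rho_psd) ?mulmx0 ?mxtrace0 // => k; apply/eqP/negbFE/diag0.
have rii_gt0 : 0 < rho i i by rewrite lt_def rii_neq0 psd_diag_ge0.
rewrite (mxtrace_deflate M rho i); apply: addr_ge0; last first.
  by apply: mulr_ge0; [rewrite invr_ge0 ltW | exact: M_ge0].
apply: IHn; last exact: psd_deflate.
apply: leq_trans (proper_card (deflate_support_proper rho_psd rii_gt0)) _.
by rewrite -ltnS.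
Qed.

Lemma mxtrace_le_of_qform_le M (B : R) rho :
  (forall x, qform M x <= B * vdot x x) -> density p rho -> \tr (M *m rho) <= B.
Proof.
move=> M_le [rho_psd tr1].
have := @mxtrace_mul_psd_ge0 (B%:M - M) rho _ rho_psd.
rewrite mulmxBl mul_scalar_mx raddfB /= mxtraceZ tr1 mulr1 subr_ge0; apply=> x.
by rewrite qformB qform_scalar subr_ge0.
Qed.

End PsdTrace.

Section WeightedMoments.
Variables (R : realType) (N p : nat) (g : 'I_N -> 'cV[R]_p).
Implicit Types (w : 'I_N -> R) (mu x : 'cV[R]_p).

Lemma qform_Smat w mu x : qform (Smat g w mu) x = \sum_n w n * vdot x (g n - mu) ^+ 2.
Proof. by rewrite /Smat qform_sum; apply: eq_bigr => n _; rewrite qformZ qform_outer. Qed.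

Lemma vdot_wmean x w : vdot x (wmean g w) = \sum_n w n * vdot x (g n).
Proof. by rewrite /wmean vdot_sumr; apply: eq_bigr => n _; rewrite vdotZr. Qed.

Lemma wsum_vdot_centered w x :
  \sum_n w n = 1 -> \sum_n w n * vdot x (g n - wmean g w) = 0.
Proof.
move=> w_sum1; under eq_bigr => n _ do rewrite vdotBr mulrBr.
by rewrite sumrB -mulr_suml w_sum1 mul1r vdot_wmean subrr.
Qed.

Lemma centered_moment_le_gamma w mu x : \sum_n w n = 1 ->
  \sum_n w n * vdot x (g n - wmean g w) ^+ 2 <= gammaf g w mu * vdot x x.
Proof.
move=> w_sum1; apply: le_trans (qform_le_opnorm _ _); rewrite qform_Smat.
have shift n : vdot x (g n - mu) = vdot x (g n - wmean g w) + vdot x (wmean g w - mu).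
  by rewrite -vdotDr addrA subrK.
under [X in _ <= X]eq_bigr => n _ do rewrite shift.
by rewrite wsum_sqr_shift wsum_vdot_centered // w_sum1 mulr0 addr0 mulr1 lerDl sqr_ge0.
Qed.

End WeightedMoments.

Section OptBound.
Local Open Scope classical_set_scope.
Variables (R : realType) (N p : nat) (eps : R) (g : 'I_N -> 'cV[R]_p).

Lemma density_scalar : (0 < p)%N -> density p ((p%:R : R)^-1)%:M.
Proof.
move=> p_gt0; split; [split|].
- exact: tr_scalar_mx.
- move=> x; rewrite qformE qform_scalar.
  by apply: mulr_ge0; [rewrite invr_ge0 ler0n | exact: vdot_ge0].
- by rewrite mxtrace_scalar -(mulr_natr (p%:R)^-1) mulVf // pnatr_eq0 -lt0n.
Qed.

Lemma OPT_le_of_weights w mu (B : R) : (0 < p)%N -> 0 <= B -> DeltaN N eps w ->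
  (forall x, qform (Smat g w mu) x <= B * vdot x x) -> OPT eps g mu <= B.
Proof.
move=> p_gt0 B_ge0 wD S_le.
have sup_le : sup [set \tr (Smat g w mu *m rho) | rho in density p] <= B.
  apply: ge_sup; first by exists (\tr (Smat g w mu *m (p%:R^-1)%:M)), (p%:R^-1)%:M;
    [exact: density_scalar|].
  by move=> _ [rho rhoD <-]; exact: mxtrace_le_of_qform_le.
rewrite /OPT; set F := [set _ | _ in _].
have [F_lb|F_no_lb] := pselect (has_lbound F).
  by apply: le_trans (ge_inf F_lb _) sup_le; exists w.
by rewrite inf_out // => -[].
Qed.

End OptBound.



Lemma alpha_eps_sqr (R : realType) (eps : R) : 0 <= eps -> eps < 1 / 2 ->
  alpha_eps eps ^+ 2 = eps / (1 - 2 * eps).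
Proof. by move=> eps_ge0 eps_lt; rewrite sqr_sqrtr // divr_ge0 //; lra. Qed.

Lemma alpha_eps_gt0 (R : realType) (eps : R) : 0 < eps -> eps < 1 / 2 -> 0 < alpha_eps eps.
Proof. by move=> eps_gt0 eps_lt; rewrite sqrtr_gt0 divr_gt0 //; lra. Qed.

Lemma alpha_eps_lt1 (R : realType) (eps : R) : 0 <= eps -> eps < 1 / 3 -> alpha_eps eps < 1.
Proof.
move=> eps_ge0 eps_lt; rewrite -sqrtr1 ltr_sqrt ?ltr01 //.
by rewrite ltr_pdivrMr ?mul1r; lra.
Qed.

Lemma le_alpha_eps_sqrt (R : realType) (eps a b q V : R) :
  0 <= eps -> eps < 1 / 2 -> 0 <= V -> 0 <= a -> 0 < b -> a + b = 1 ->
  (1 - eps) * a <= eps -> (b * q) ^+ 2 <= b * a * V ->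
  q <= alpha_eps eps * Num.sqrt V.
Proof.
move=> eps_ge0 eps_lt V_ge0 a_ge0 b_gt0 ab1 a_le bq_le.
have bq : b * q ^+ 2 <= a * V.
  by rewrite -(ler_pM2l b_gt0) mulrA -expr2 -exprMn mulrA.
have a_le' : a * (1 - 2 * eps) <= eps * b by nra.
have qV : q ^+ 2 * (1 - 2 * eps) <= eps * V.
  rewrite -(ler_pM2l b_gt0); have e12 : 0 <= 1 - 2 * eps by lra.
  have -> : b * (q ^+ 2 * (1 - 2 * eps)) = b * q ^+ 2 * (1 - 2 * eps) by ring.
  apply: le_trans (ler_wpM2r e12 bq) _.
  have -> : a * V * (1 - 2 * eps) = a * (1 - 2 * eps) * V by ring.
  apply: le_trans (ler_wpM2r V_ge0 a_le') _.
  by rewrite -mulrA mulrCA.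
apply: le_trans (ler_norm q) _.
rewrite -sqrtr_sqr -[alpha_eps eps]ger0_norm ?sqrtr_ge0 // -sqrtr_sqr -sqrtrM ?sqr_ge0 //.
rewrite ler_wsqrtr // alpha_eps_sqr // mulrAC ler_pdivlMr //; lra.
Qed.

Definition uniform_on (R : fieldType) (N : nat) (I : {set 'I_N}) (n : 'I_N) : R :=
  (n \in I)%:R / #|I|%:R.

Section Resilience.
Variables (R : realType) (N p : nat) (eps : R) (g : 'I_N -> 'cV[R]_p).
Variables (Iin : {set 'I_N}) (mug : 'cV[R]_p) (Sigg : 'M[R]_p) (dmu dSig : R).
Hypotheses (N_gt0 : (0 < N)%N) (eps_ge0 : 0 <= eps) (eps_lt_half : eps < 1 / 2).
Hypothesis stable : inlier_stable eps g Iin mug Sigg dmu dSig.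
Implicit Types (w : 'I_N -> R) (mu x : 'cV[R]_p).

Lemma DeltaNP w : DeltaN N eps w <->
  \sum_n w n = 1 /\ forall n, 0 <= w n /\ w n * ((1 - eps) * N%:R) <= 1.
Proof.
have c_gt0 : 0 < (1 - eps) * N%:R.
  by apply: mulr_gt0; rewrite ?ltr0n //; move: eps_lt_half; lra.
rewrite /DeltaN /DeltaI /mkset cardsT card_ord.
have -> : \sum_(n in [set: 'I_N]) w n = \sum_n w n by apply: eq_bigl => n; rewrite inE.
split=> -[w_sum1 w_bnd]; split=> // n.
  by have [w_ge0] := w_bnd n (finset.in_setT n); rewrite -ler_pdivlMr // mul1r.
by move=> _; have [w_ge0] := w_bnd n; rewrite ler_pdivlMr // mul1r.
Qed.

Lemma card_inliers_add : #|Iin|%:R + #|~: Iin|%:R = N%:R :> R.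
Proof. by rewrite -natrD cardsC card_ord. Qed.

Lemma card_outliers_le : #|~: Iin|%:R <= eps * N%:R.
Proof. by case: stable. Qed.

Lemma outlier_mass_scaled_le w : DeltaN N eps w ->
  (\sum_(n | n \notin Iin) w n) * ((1 - eps) * N%:R) <= #|~: Iin|%:R.
Proof.
move=> /DeltaNP[_ w_bnd]; rewrite mulr_suml.
apply: le_trans (_ : \sum_(n | n \notin Iin) 1 <= _).
  by apply: ler_sum => n _; case: (w_bnd n).
by rewrite sumr_const ler_nat; apply/eq_leq/eq_card => n; rewrite inE.
Qed.

Lemma outlier_mass_le w : DeltaN N eps w ->
  (1 - eps) * \sum_(n | n \notin Iin) w n <= eps.
Proof.
move=> wD; have := outlier_mass_scaled_le wD; have := card_outliers_le.
have N_gt0' : 0 < N%:R :> R by rewrite ltr0n.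
move=> k_le a_le; rewrite -(ler_pM2r N_gt0'); nra.
Qed.

Lemma inlier_mass_ge w : DeltaN N eps w ->
  #|Iin|%:R - eps * N%:R <= (\sum_(n in Iin) w n) * ((1 - eps) * N%:R).
Proof.
move=> wD; have := outlier_mass_scaled_le wD; have := card_inliers_add.
have [w_sum1 _] := (DeltaNP w).1 wD.
have ab1 : \sum_(n in Iin) w n + \sum_(n | n \notin Iin) w n = 1.
  by rewrite -w_sum1 [RHS](bigID (fun n => n \in Iin)).
move=> mk a_le; nra.
Qed.

Lemma card_inliers_ge : (1 - eps) * N%:R <= #|Iin|%:R.
Proof. have := card_inliers_add; have := card_outliers_le; lra. Qed.

Lemma inlier_renormalize w : DeltaN N eps w ->
  DeltaI Iin (eps / (1 - eps)) (fun n => w n / \sum_(m in Iin) w m).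
Proof.
move=> wD; have [_ w_bnd] := (DeltaNP w).1 wD; rewrite /DeltaI /mkset.
have b_ge := inlier_mass_ge wD; set b := \sum_(m in Iin) w m in b_ge *.
have m_ge := card_inliers_ge; set m : R := #|Iin|%:R in b_ge m_ge *.
have N_gt0' : 0 < N%:R :> R by rewrite ltr0n.
have eps_lt := eps_lt_half; have eps0 := eps_ge0.
have c_gt0 : 0 < (1 - eps) * N%:R by apply: mulr_gt0 => //; lra.
have b_gt0 : 0 < b by nra.
have m_gt0 : 0 < m by nra.
split; first by rewrite -mulr_suml divff ?gt_eqF.
move=> n _; have [w_ge0 w_le] := w_bnd n; split; first by apply: divr_ge0 => //; exact: ltW.
have -> : 1 / ((1 - eps / (1 - eps)) * m) = (1 - eps) / ((1 - 2 * eps) * m).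
  by field; rewrite !gt_eqF //; lra.
rewrite ler_pdivrMr // mulrAC ler_pdivlMr; last by apply: mulr_gt0 => //; lra.
rewrite -(ler_pM2r c_gt0); apply: le_trans (_ : (1 - 2 * eps) * m <= _).
  rewrite mulrAC -[X in _ <= X]mul1r ler_wpM2r //; apply: mulr_ge0 => //; lra.
apply: le_trans (_ : (1 - eps) * (m - eps * N%:R) <= _); first by nra.
by rewrite -mulrA ler_wpM2l //; lra.
Qed.

Lemma card_inliers_gt0 : 0 < #|Iin|%:R :> R.
Proof.
have N_gt0' : 0 < N%:R :> R by rewrite ltr0n.
apply: lt_le_trans card_inliers_ge; apply: mulr_gt0 => //; move: eps_lt_half; lra.
Qed.

Lemma sum_uniform_inliers : \sum_(n in Iin) uniform_on R Iin n = 1.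
Proof.
rewrite -mulr_suml (eq_bigr (fun _ => 1)) => [|n ->]; last by [].
by rewrite sumr_const divff // gt_eqF // card_inliers_gt0.
Qed.

Lemma uniform_inliers_DeltaN : DeltaN N eps (uniform_on R Iin).
Proof.
apply/DeltaNP; split.
  rewrite (bigID (fun n => n \in Iin)) /= sum_uniform_inliers big1 ?addr0 //.
  by move=> n /negbTE nI; rewrite /uniform_on nI mul0r.
move=> n; rewrite /uniform_on; have m_gt0 := card_inliers_gt0; split.
  by apply: divr_ge0; rewrite ?ler0n // ltW.
rewrite mulrAC ler_pdivrMr //; case: (n \in Iin); rewrite ?mul0r ?mul1r //.
exact: card_inliers_ge.
Qed.

Lemma uniform_inliers_DeltaI : DeltaI Iin (eps / (1 - eps)) (uniform_on R Iin).
Proof.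
split=> [|n nI]; first exact: sum_uniform_inliers.
have m_gt0 := card_inliers_gt0; have := eps_lt_half; have := eps_ge0 => e0 e1.
rewrite /uniform_on nI mulr1n mul1r; split; first by rewrite invr_ge0 ltW.
have ep_ge0 : 0 <= eps / (1 - eps) by apply: divr_ge0; lra.
have ep_lt1 : eps / (1 - eps) < 1 by rewrite ltr_pdivrMr; lra.
rewrite -[X in X <= _]div1r ler_pdivlMr ?mulr_gt0 ?subr_gt0 //.
by rewrite mul1r mulrCA mulVf ?gt_eqF // mulr1 lerBlDr lerDl.
Qed.

Lemma qform_Smat_inlier_le w mu x : DeltaI Iin (eps / (1 - eps)) w ->
  (forall n, n \notin Iin -> w n = 0) ->
  qform (Smat g w mu) x <=
  (opnorm Sigg + dSig + (dmu + norm2 (mu - mug)) ^+ 2) * vdot x x.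
Proof.
move=> wD w_out; have [_ [_ [dmu_ge0 [dSig_ge0 stab]]]] := stable.
have [Y_le cov_le] := stab w wD; have [w_sum1 _] := wD.
rewrite qform_Smat (bigID (fun n => n \in Iin)) /= [X in _ + X]big1 ?addr0; last first.
  by move=> n nI; rewrite w_out ?mul0r.
set c := vdot x (mug - mu).
have shift n : vdot x (g n - mu) = vdot x (g n - mug) + c by rewrite -vdotDr addrA subrK.
under eq_bigr => n _ do rewrite shift.
rewrite wsum_sqr_shift w_sum1 mulr1.
have cov : \sum_(n in Iin) w n * vdot x (g n - mug) ^+ 2 <= (opnorm Sigg + dSig) * vdot x x.
  have := cov_le x; rewrite !qformE qform_sum qformD qform_scalar.
  under eq_bigr => n _ do rewrite qformZ qform_outer.
  move/le_trans; apply; rewrite mulrDl lerD2r; exact: qform_le_opnorm.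
have lin : `|\sum_(n in Iin) w n * vdot x (g n - mug)| <= norm2 x * dmu.
  under eq_bigr => n _ do rewrite -vdotZr.
  rewrite -vdot_sumr; apply: le_trans (vdot_le_norm2 _ _) _.
  exact: ler_wpM2l (norm2_ge0 x) _ _ Y_le.
have c_le : `|c| <= norm2 x * norm2 (mu - mug).
  by rewrite -opprB norm2N -/c; exact: vdot_le_norm2.
have cS : c * \sum_(n in Iin) w n * vdot x (g n - mug) <=
          norm2 x * norm2 (mu - mug) * (norm2 x * dmu).
  by apply: le_trans (ler_norm _) _; rewrite normrM; apply: ler_pM.
have c2 : c ^+ 2 <= (norm2 x * norm2 (mu - mug)) ^+ 2.
  by rewrite -real_normK ?num_real // !expr2; apply: ler_pM.
have := sqr_ge0 (dmu * norm2 x); rewrite -norm2_sqr in cov *; nra.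
Qed.

Lemma OPT_le_inlier_bound mu : (0 < p)%N ->
  OPT eps g mu <= opnorm Sigg + dSig + (dmu + norm2 (mu - mug)) ^+ 2.
Proof.
move=> p_gt0; have [_ [_ [_ [dSig_ge0 _]]]] := stable.
apply: (OPT_le_of_weights p_gt0 _ uniform_inliers_DeltaN).
  by rewrite !addr_ge0 ?opnorm_ge0 ?sqr_ge0.
move=> x; apply: qform_Smat_inlier_le; first exact: uniform_inliers_DeltaI.
by move=> n /negbTE nI; rewrite /uniform_on nI mul0r.
Qed.

Lemma wmean_dev_le w mu : DeltaN N eps w ->
  norm2 (wmean g w - mug) <= dmu + alpha_eps eps * Num.sqrt (gammaf g w mu).
Proof.
move=> wD; have [w_sum1 w_bnd] := (DeltaNP w).1 wD.
have w_ge0 n : 0 <= w n by case: (w_bnd n).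
have [_ [_ [dmu_ge0 [_ stab]]]] := stable.
have [Y_le _] := stab _ (inlier_renormalize wD).
set b := \sum_(m in Iin) w m in Y_le; set Y := \sum_(n in Iin) _ *: _ in Y_le.
have a_le := outlier_mass_le wD; set a := \sum_(n | n \notin Iin) w n in a_le.
have ab1 : a + b = 1 by rewrite addrC -w_sum1 [RHS](bigID (fun n => n \in Iin)).
have a_ge0 : 0 <= a by exact: sumr_ge0.
have b_gt0 : 0 < b by move: eps_lt_half; nra.
(* Along the error D, the inlier share of the centred first moment is - b q. *)
set D := wmean g w - mug; set q := vdot D D - vdot D Y.
have bY : b * vdot D Y = \sum_(n in Iin) w n * vdot D (g n - mug).
  rewrite /Y vdot_sumr mulr_sumr; apply: eq_bigr => n _.
  by rewrite vdotZr mulrA mulrCA mulfV ?gt_eqF ?mulr1.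
have z_in : \sum_(n in Iin) w n * vdot D (g n - wmean g w) = - (b * q).
  have gW n : vdot D (g n - wmean g w) = vdot D (g n - mug) - vdot D D.
    by rewrite -vdotBr /D opprB addrA subrK.
  under eq_bigr => n _ do rewrite gW mulrBr.
  by rewrite sumrB -mulr_suml -/b -bY /q; ring.
have := mean_zero_part_sqr_le (fun n => n \in Iin) w_ge0 w_sum1
  (wsum_vdot_centered g D w_sum1).
rewrite /= z_in sqrrN -/b -/a => part.
have q_le : q <= alpha_eps eps * Num.sqrt (gammaf g w mu * vdot D D).
  apply: (le_alpha_eps_sqrt eps_ge0 eps_lt_half _ a_ge0 b_gt0 ab1 a_le).
    by rewrite mulr_ge0 ?opnorm_ge0 ?vdot_ge0.
  apply: le_trans part _; apply: ler_wpM2l; first by rewrite mulr_ge0 // ltW.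
  exact: centered_moment_le_gamma.
rewrite sqrtrM ?opnorm_ge0 // -norm2_vdot mulrA in q_le.
set s := alpha_eps eps * Num.sqrt (gammaf g w mu) in q_le *.
have s_ge0 : 0 <= s by rewrite mulr_ge0 ?sqrtr_ge0.
have DY : vdot D Y <= norm2 D * dmu.
  apply: le_trans (ler_norm _) (le_trans (vdot_le_norm2 _ _) _).
  exact: ler_wpM2l (norm2_ge0 D) _ _ Y_le.
have DD : norm2 D ^+ 2 = vdot D Y + q by rewrite norm2_sqr /q; ring.
have := norm2_ge0 D; nra.
Qed.

End Resilience.

Lemma geometric_le_of_ln (R : realType) (al M K : R) (k : nat) :
  0 < al < 1 -> 0 < M -> 0 < K -> ln (M / K) / ln (1 / al) <= k%:R ->
  al ^+ k * M <= K.
Proof.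
move=> /andP[al_gt0 al_lt1] M_gt0 K_gt0.
have lnal_gt0 : 0 < ln (1 / al) by apply: ln_gt0; rewrite ltr_pdivlMr // mul1r.
rewrite ler_pdivrMr // ln_div ?posrE // div1r lnV ?posrE // => k_ge.
rewrite -ler_ln ?posrE ?mulr_gt0 ?exprn_gt0 // lnM ?posrE ?exprn_gt0 // lnXn //.
by rewrite -mulr_natl; nra.
Qed.

Lemma s_max_geometric (R : realType) (eps e1 Rinf Rk : R) :
  0 < alpha_eps eps < 1 -> Rinf < Rk ->
  exists n : nat, (n.+1%:Z <= s_max eps e1 Rinf Rk)%R /\
                  alpha_eps eps ^+ n * Num.max (e1 - Rinf) 0 <= Rk - Rinf.
Proof.
move=> al_bnd Rk_gt; rewrite /s_max; case: ifPn => [e1_le|].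
  exists 0%N; split=> //; rewrite (max_idPr _) ?subr_le0 // mulr0 subr_ge0.
  exact: ltW.
rewrite -ltNge => e1_gt; set X := ln _ / ln _; set c := Num.max 0 (Num.ceil X).
have c_ge0 : (0 <= c)%R by rewrite le_max lexx.
exists `|c|%N; rewrite -addn1 PoszD gez0_abs // addrC; split=> //.
rewrite (max_idPl _); last by rewrite subr_ge0 ltW.
apply: geometric_le_of_ln; rewrite ?subr_gt0 //.
apply: le_trans (ceil_ge X) _.
by rewrite -[_%:R]/((`|c|%N : int)%:~R) gez0_abs // ler_int le_max lexx orbT.
Qed.

Definition not_stopped_before (R : realType) (C : R) (gam : nat -> R) (s : nat) : Prop :=
  forall r, (1 <= r < s)%N -> C < gam r.

Lemma not_stopped_before1 (R : realType) (C : R) (gam : nat -> R) :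
  not_stopped_before C gam 1.
Proof. by move=> r /andP[r_ge1 r_lt1]; move: (leq_trans r_ge1 r_lt1). Qed.

Lemma not_stopped_beforeS (R : realType) (C : R) (gam : nat -> R) s :
  not_stopped_before C gam s -> C < gam s -> not_stopped_before C gam s.+1.
Proof.
move=> before now r /andP[r_ge1]; rewrite ltnS leq_eqVlt => /orP[/eqP-> //|r_lt].
by apply: before; rewrite r_ge1.
Qed.

Section StoppedIteration.
Variables (R : realType) (C al Rinf Rk : R) (gam e : nat -> R).
Hypothesis al_ge0 : 0 <= al.
Hypothesis stop_near : forall s, (1 <= s)%N ->
  not_stopped_before C gam s -> e s <= Rk -> gam s <= C.
Hypothesis contract : forall s, (1 <= s)%N ->
  not_stopped_before C gam s -> C < gam s -> e s.+1 - Rinf <= al * (e s - Rinf).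

Lemma stops_or_contracts n :
  (exists s, [/\ (1 <= s <= n)%N, not_stopped_before C gam s & gam s <= C]) \/
  (not_stopped_before C gam n.+1 /\ e n.+1 - Rinf <= al ^+ n * Num.max (e 1%N - Rinf) 0).
Proof.
elim: n => [|n [[s [s_range before stop]]|[before e_le]]].
- by right; split; [exact: not_stopped_before1 | rewrite expr0 mul1r le_max lexx].
- by left; exists s; split=> //; case/andP: s_range => -> /leqW.
have [stop|] := boolP (gam n.+1 <= C).
  by left; exists n.+1; split; rewrite ?leqnn.
rewrite -ltNge => go; right; split; first exact: not_stopped_beforeS.
apply: le_trans (contract _ before go) _ => //.
by rewrite exprS -mulrA ler_wpM2l.
Qed.

Lemma stops_within n : al ^+ n * Num.max (e 1%N - Rinf) 0 <= Rk - Rinf ->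
  exists s, [/\ (1 <= s <= n.+1)%N, not_stopped_before C gam s & gam s <= C].
Proof.
move=> geom; have [[s [s_range before stop]]|[before e_le]] := stops_or_contracts n.
  by exists s; split=> //; case/andP: s_range => -> /leqW.
exists n.+1; split; rewrite ?leqnn //; apply: stop_near => //.
by have := le_trans e_le geom; rewrite lerD2r.
Qed.

End StoppedIteration.



Lemma deltaT_ge0 (R : realType) (N p : nat) (g : 'I_N -> 'cV[R]_p) (eps : R) (T : nat) :
  0 <= nu g -> 0 <= deltaT g eps T.
Proof. by move=> nu_ge0; rewrite /deltaT !mulr_ge0 ?addr_ge0 ?sqrtr_ge0. Qed.

Lemma sqrt_add_sqr_le (R : realType) (a b : R) : 0 <= a -> 0 <= b ->
  Num.sqrt (a + b ^+ 2) <= Num.sqrt a + b.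
Proof.
move=> a_ge0 b_ge0; rewrite -[X in _ <= X]ger0_norm ?addr_ge0 ?sqrtr_ge0 //.
rewrite -sqrtr_sqr ler_wsqrtr // sqrrD sqr_sqrtr //.
by have := mulr_ge0 (sqrtr_ge0 a) b_ge0; lra.
Qed.

Lemma R_inf_contraction (R : realType) (eps dmu sigop dSig dT e e' gam : R) :
  0 <= alpha_eps eps -> alpha_eps eps < 1 -> 0 <= dmu -> 0 <= sigop + dSig + dT ->
  0 <= e -> gam <= sigop + dSig + dT + (dmu + e) ^+ 2 ->
  e' <= dmu + alpha_eps eps * Num.sqrt gam ->
  e' - R_inf eps dmu sigop dSig dT <= alpha_eps eps * (e - R_inf eps dmu sigop dSig dT).
Proof.
rewrite /R_inf /R_epsT; set al := alpha_eps eps; set K := sigop + dSig + dT.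
move=> al_ge0 al_lt1 dmu_ge0 K_ge0 e_ge0 gam_le e'_le.
have sqrt_gam : Num.sqrt gam <= Num.sqrt K + (dmu + e).
  exact: le_trans (ler_wsqrtr gam_le) (sqrt_add_sqr_le K_ge0 (addr_ge0 dmu_ge0 e_ge0)).
have := ler_wpM2l al_ge0 sqrt_gam.
set Rinf := _ / (1 - al).
have Rinf_fix : Rinf = al * Rinf + (1 + al) * dmu + al * Num.sqrt K.
  by rewrite /Rinf; field; rewrite subr_eq0 eq_sym lt_eqF.
lra.
Qed.

Section OuterLoop.
Variables (R : realType) (N p : nat) (eps : R) (g : 'I_N -> 'cV[R]_p) (T : nat).
Variables (Iin : {set 'I_N}) (mug : 'cV[R]_p) (Sigg : 'M[R]_p) (dmu dSig : R).
Variables (muhat : nat -> 'cV[R]_p) (wbar : nat -> 'I_N -> R) (Rk Cstop : R).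

Local Notation gam s := (gammaf g (wbar s) (muhat s)).
Local Notation err s := (norm2 (muhat s - mug)).
Local Notation dT := (deltaT g eps T).
Local Notation Rinf := (R_inf eps dmu (opnorm Sigg) dSig dT).
Local Notation reached := (not_stopped_before Cstop (fun r => gam r)).

Hypotheses (N_gt0 : (0 < N)%N) (p_gt0 : (0 < p)%N).
Hypotheses (eps_gt0 : 0 < eps) (eps_lt_third : eps < 1 / 3) (nu_ge0 : 0 <= nu g).
Hypothesis stable : inlier_stable eps g Iin mug Sigg dmu dSig.
Hypothesis near_opt : forall s, (1 <= s)%N -> reached s ->
  DeltaN N eps (wbar s) /\ gam s <= OPT eps g (muhat s) + dT.
Hypothesis update : forall s, (1 <= s)%N -> reached s -> Cstop < gam s ->
  muhat s.+1 = wmean g (wbar s).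
Hypothesis Cstop_ge : opnorm Sigg + dSig + (dmu + Rk) ^+ 2 + dT <= Cstop.

Let eps_lt_half : eps < 1 / 2. Proof. by move: eps_lt_third; lra. Qed.

Let alpha_eps_bounds : 0 < alpha_eps eps < 1.
Proof. by rewrite alpha_eps_gt0 ?alpha_eps_lt1 ?ltW. Qed.

Lemma gamma_le_inlier_bound s : (1 <= s)%N -> reached s ->
  gam s <= opnorm Sigg + dSig + dT + (dmu + err s) ^+ 2.
Proof.
move=> s_ge1 before; apply: le_trans (near_opt s_ge1 before).2 _.
rewrite addrAC lerD2r.
exact: OPT_le_inlier_bound N_gt0 (ltW eps_gt0) eps_lt_half stable _ p_gt0.
Qed.

Lemma stops_when_close s : (1 <= s)%N -> reached s -> err s <= Rk -> gam s <= Cstop.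
Proof.
move=> s_ge1 before err_le; have [_ [_ [dmu_ge0 _]]] := stable.
apply: le_trans (gamma_le_inlier_bound s_ge1 before) (le_trans _ Cstop_ge).
rewrite addrAC lerD2r lerD2l !expr2.
by apply: ler_pM; rewrite ?addr_ge0 ?norm2_ge0 ?lerD2l.
Qed.

Lemma output_dev_le s : (1 <= s)%N -> reached s ->
  norm2 (wmean g (wbar s) - mug) <= dmu + alpha_eps eps * Num.sqrt (gam s).
Proof.
move=> s_ge1 before; have [wD _] := near_opt s_ge1 before.
by have := wmean_dev_le N_gt0 (ltW eps_gt0) eps_lt_half stable (muhat s) wD.
Qed.

Lemma stopped_output_dev_le s : (1 <= s)%N -> reached s -> gam s <= Cstop ->
  norm2 (wmean g (wbar s) - mug) <= dmu + alpha_eps eps * Num.sqrt Cstop.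
Proof.
move=> s_ge1 before stop; apply: le_trans (output_dev_le s_ge1 before) _.
have /andP[al_gt0 _] := alpha_eps_bounds.
by rewrite lerD2l; apply: ler_wpM2l; [exact: ltW | exact: ler_wsqrtr].
Qed.

Lemma error_contracts s : (1 <= s)%N -> reached s -> Cstop < gam s ->
  err s.+1 - Rinf <= alpha_eps eps * (err s - Rinf).
Proof.
move=> s_ge1 before go; have [_ [_ [dmu_ge0 [dSig_ge0 _]]]] := stable.
have /andP[al_gt0 al_lt1] := alpha_eps_bounds.
apply: R_inf_contraction (ltW al_gt0) al_lt1 dmu_ge0 _ (norm2_ge0 _) _ _.
- by have := opnorm_ge0 Sigg; have := deltaT_ge0 eps T nu_ge0; lra.
- exact: gamma_le_inlier_bound.
- by rewrite (update s_ge1 before go); exact: output_dev_le.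
Qed.

Lemma stops_by_s_max : Rinf < Rk ->
  exists s, [/\ (1 <= s)%N, (s%:Z <= s_max eps (err 1%N) Rinf Rk)%R,
                reached s & gam s <= Cstop].
Proof.
move=> Rk_gt; have [n [n_le geom]] := s_max_geometric (err 1%N) alpha_eps_bounds Rk_gt.
have /andP[al_gt0 _] := alpha_eps_bounds.
have [s [/andP[s_ge1 s_le] before stop]] :=
  stops_within (ltW al_gt0) stops_when_close error_contracts geom.
by exists s; split=> //; apply: le_trans n_le; rewrite lez_nat.
Qed.

End OuterLoop.

Theorem mainTheorem12 (R : realType) (N p : nat) (eps : R)
  (g : 'I_N -> 'cV[R]_p) (T : nat)
  (Iin : {set 'I_N}) (mug : 'cV[R]_p) (Sigg : 'M[R]_p) (dmu dSig : R)
  (muhat : nat -> 'cV[R]_p) (wbar : nat -> 'I_N -> R) (Rk Cstop : R) :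
  (1 <= N)%N -> (2 <= p)%N -> 0 < eps -> eps < 1 / 3 ->
  0 < nu g ->
  4 * Num.max (ln (1 / (1 - eps))) (ln (p%:R : R)) <= T%:R ->
  inlier_stable eps g Iin mug Sigg dmu dSig ->
  in_conv g (muhat 1%N) ->
  (* iteration s is reached iff no earlier iteration r (1 <= r < s) stopped *)
  (forall s : nat, (1 <= s)%N ->
     (forall r : nat, (1 <= r < s)%N -> Cstop < gammaf g (wbar r) (muhat r)) ->
     DeltaN N eps (wbar s) /\
     gammaf g (wbar s) (muhat s) <= OPT eps g (muhat s) + deltaT g eps T) ->
  (forall s : nat, (1 <= s)%N ->
     (forall r : nat, (1 <= r < s)%N -> Cstop < gammaf g (wbar r) (muhat r)) ->
     Cstop < gammaf g (wbar s) (muhat s) ->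
     muhat s.+1 = wmean g (wbar s)) ->
  R_inf eps dmu (opnorm Sigg) dSig (deltaT g eps T) < Rk ->
  opnorm Sigg + dSig + (dmu + Rk) ^+ 2 + deltaT g eps T <= Cstop ->
  (* (1a) *)
  (forall s : nat, (1 <= s)%N ->
     (forall r : nat, (1 <= r < s)%N -> Cstop < gammaf g (wbar r) (muhat r)) ->
     norm2 (muhat s - mug) <= Rk -> gammaf g (wbar s) (muhat s) <= Cstop) /\
  (* (1b): the procedure stops at some iteration s <= s_max *)
  (exists s : nat, (1 <= s)%N /\
     (s%:Z <= s_max eps (norm2 (muhat 1%N - mug))
                (R_inf eps dmu (opnorm Sigg) dSig (deltaT g eps T)) Rk)%R /\
     (forall r : nat, (1 <= r < s)%N -> Cstop < gammaf g (wbar r) (muhat r)) /\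
     gammaf g (wbar s) (muhat s) <= Cstop) /\
  (* (2) *)
  (forall s : nat, (1 <= s)%N ->
     (forall r : nat, (1 <= r < s)%N -> Cstop < gammaf g (wbar r) (muhat r)) ->
     gammaf g (wbar s) (muhat s) <= Cstop ->
     norm2 (wmean g (wbar s) - mug) <= dmu + alpha_eps eps * Num.sqrt Cstop).
Proof.
(* The bound on [T] and [in_conv] only serve the MW-MMW subroutine, whose accuracy
   is assumed directly by [near_opt]. *)
move=> N_gt0 p_ge2 eps_gt0 eps_lt nu_gt0 _ stable _ near_opt update Rk_gt Cstop_ge.
have p_gt0 : (0 < p)%N by exact: leq_trans p_ge2.
split; first exact: stops_when_close N_gt0 p_gt0 eps_gt0 eps_lt stable near_opt Cstop_ge.
split; last exact: stopped_output_dev_le N_gt0 eps_gt0 eps_lt stable near_opt.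
have [s [s_ge1 s_le before stop]] := stops_by_s_max N_gt0 p_gt0 eps_gt0 eps_lt
  (ltW nu_gt0) stable near_opt update Cstop_ge Rk_gt.
by exists s.
Qed.
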